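(* Let $R,S$ be finite nonempty sets, $k$ a positive integer, $p_r>0$ ($r\in R$), $T=\sum_{r\in R}p_r$, $d_{r,s}\ge0$, and $\kappa<0$. Let $F$ be the set of $(\mathbf x,\mathbf y)$ with $x_s,y_{r,s}\in\{0,1\}$, $\sum_{s\in S}x_s=k$, $y_{r,s}\le x_s$, and $\sum_{s\in S}y_{r,s}=1$ for all $r$. For $\mathbf y$ let $\overline{\mathcal K}(\mathbf y)=\sum_{r,s}p_ry_{r,s}e^{-\kappa d_{r,s}}$ and $\mathcal K(\mathbf y)=-\frac1\kappa\ln\left(\frac1T\overline{\mathcal K}(\mathbf y)\right)$. Let $U\subseteq S$, $c_s\ge0$ for $s\in U$, $\sigma(\mathbf x)=\sum_{s\in U}c_sx_s$, $\sigma^{max}=\max_{(\mathbf x,\mathbf y)\in F}\sigma(\mathbf x)$. Let $(\mathbf x^{all},\mathbf y^{all})$ be optimal for $\min\{\overline{\mathcal K}(\mathbf y):(\mathbf x,\mathbf y)\in F\}$, $\mathcal K^{all}=\mathcal K(\mathbf y^{all})$, $\sigma^{all}=\sigma(\mathbf x^{all})$. Set $\hat{\mathcal K}=\mathcal K^{all}$ and let $(\mathbf x^*,\mathbf y^*,v^*,q^* )$ be optimal for \[ \text{(KPL}^p)\quad \min\ \overline{\mathcal K}(\mathbf y)+Te^{-\kappa\hat{\mathcal K}}(v-1)\ \text{ s.t. } (\mathbf x,\mathbf y)\in F,\ v\ge e^{q},\ q=-\kappa\,\sigma(\mathbf x), \] with $\sigma^*=\sigma(\mathbf x^* )$, $q^*=-\kappa\sigma^*$,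 $\mathcal K^*=\mathcal K(\mathbf y^* )$. Let $w\in(0,1)$, $\beta_i=iw$ for $i=0,\dots,n$ with $nw>-\kappa\sigma^{max}$, and $g(q)=\max_{0\le i\le n}\left(e^{\beta_i}+e^{\beta_i}(q-\beta_i)\right)$ (the tangent-line approximation of $e^q$ in the linearized model (KPL$^t$)). Define $\ddot\sigma$ by \[ \mathcal K^*+\ddot\sigma=-\tfrac1\kappa\ln\left(\tfrac1T\left(\overline{\mathcal K}(\mathbf y^* )+Te^{-\kappa\hat{\mathcal K}}\left(g(q^* )-1\right)\right)\right), \] and let $A(w):=e^{\frac{we^w}{e^w-1}-1}-\frac{we^w}{e^w-1}$. Then the penalized locations are under-penalized and \[ 0\le\sigma^*-\ddot\sigma\le\sigma^{all}\left(1-e^{\kappa\sigma^*}\right)+\frac1\kappa\ln\left(1-A(w)\right). \] If, in addition, $c_s=c$ for all $s\in U$ and $w=-\kappa c$, then \[ 0\le\sigma^*-\ddot\sigma\le\sigma^{all}\left(1-e^{\kappa\sigma^*}\right). \]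
   Context: $U$ is a set of less desirable potential facility locations with distance penalties $c_s$; $\sigma^*$ is the intended penalty of the optimal solution of the penalized Kolm–Pollak model and $\ddot\sigma$ the penalty actually applied to the optimal Kolm–Pollak score by the linearized penalized model, which uses the approximation $\hat{\mathcal K}=\mathcal K^{all}$ of the optimal unpenalized score. *)

From HB Require Import structures.
From mathcomp Require Import all_boot all_order all_algebra.
From mathcomp Require Import reals.
From mathcomp Require Import sequences exp.
Set Implicit Arguments. Unset Strict Implicit. Unset Printing Implicit Defensive.
Import Order.TTheory GRing.Theory Num.Theory.
Local Open Scope ring_scope.

Section KP.
Variables (R : realType) (Rr Ss : finType).

Definition binary (a : R) : Prop := a = 0 \/ a = 1.

Definition feasible (k : nat) (x : Ss -> R) (y : Rr -> Ss -> R) : Prop :=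
  [/\ forall s, binary (x s),
      forall r s, binary (y r s),
      \sum_(s : Ss) x s = k%:R,
      forall r s, y r s <= x s &
      forall r, \sum_(s : Ss) y r s = 1].

Definition Kbar (p : Rr -> R) (d : Rr -> Ss -> R) (kappa : R) (y : Rr -> Ss -> R) : R :=
  \sum_(r : Rr) \sum_(s : Ss) p r * y r s * expR (- kappa * d r s).

Definition totT (p : Rr -> R) : R := \sum_(r : Rr) p r.

Definition KP (p : Rr -> R) (d : Rr -> Ss -> R) (kappa : R) (y : Rr -> Ss -> R) : R :=
  - kappa^-1 * ln ((totT p)^-1 * Kbar p d kappa y).

Definition sigma (U : {set Ss}) (c : Ss -> R) (x : Ss -> R) : R :=
  \sum_(s in U) c s * x s.

Definition KPLp_obj (p : Rr -> R) (d : Rr -> Ss -> R) (kappa Khat : R)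
  (y : Rr -> Ss -> R) (v : R) : R :=
  Kbar p d kappa y + totT p * expR (- kappa * Khat) * (v - 1).

Definition KPLp_feasible (k : nat) (U : {set Ss}) (c : Ss -> R) (kappa : R)
  (x : Ss -> R) (y : Rr -> Ss -> R) (v q : R) : Prop :=
  [/\ feasible k x y, expR q <= v & q = - kappa * sigma U c x].

End KP.

(* tangent-line approximation g(q) = max_{0<=i<=n} (e^{b_i} + e^{b_i}(q - b_i)),
   b_i = i w.  The fold starts from the i = 0 term, so this is exactly the max. *)
Definition gtan (R : realType) (n : nat) (w q : R) : R :=
  \big[Num.max/(expR 0 + expR 0 * (q - 0))]_(i < n.+1)
     (expR (i%:R * w) + expR (i%:R * w) * (q - i%:R * w)).

Definition Aw (R : realType) (w : R) : R :=
  expR (w * expR w / (expR w - 1) - 1) - w * expR w / (expR w - 1).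

From HB Require Import structures.
From mathcomp Require Import all_boot all_order all_algebra.
From mathcomp Require Import reals.
From mathcomp Require Import sequences exp.
From mathcomp Require Import ring lra.
Set Implicit Arguments. Unset Strict Implicit. Unset Printing Implicit Defensive.
Import Order.TTheory GRing.Theory Num.Theory.
Local Open Scope ring_scope.

(* Comparing the optimum of (KPL^p) with the feasible point built from
   (x^all, y^all), and using that the coefficient T e^{-kappa Khat} is exactly
   B = Kbar(y^all), gives  Kbar(y^* ) + B (e^{q^* } - 1) <= B e^{q^all}  with
   q = -kappa sigma.  Up to the factor -1/kappa, sigma^* - sigma'' is the gap
   between q^* and ln ((Kbar(y^* ) + B (g(q^* ) - 1)) / Kbar(y^* )).  This gap
   is nonnegative because g <= exp and B <= Kbar(y^* ).  It is bounded above
   because g(q) >= (1 - A(w)) e^q, A(w) being the largest distance between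
   e^t and its tangents at two consecutive breakpoints, and because
   e^a (e^b - e^a + 1) <= e^b e^{b (1 - e^{-a})} for 0 <= a <= b.  When all
   penalties equal c and w = -kappa c, q^* is a breakpoint, so g(q^* ) = e^{q^* }
   and A(w) can be replaced by 0. *)

Section ExpTangents.
Variable R : realType.
Implicit Types b q t w : R.

Lemma expR_tangent_le b q : expR b + expR b * (q - b) <= expR q.
Proof.
have -> : expR q = expR b * expR (q - b) by rewrite -expRD; congr expR; ring.
by rewrite -[X in X + _]mulr1 -mulrDr ler_wpM2l ?expR_ge1Dx // ltW // expR_gt0.
Qed.

Lemma expR1_lt3 : expR (1 : R) < 3.
Proof.
have -> : (1 : R) = 6%:R * 6^-1 by rewrite mulfV // pnatr_eq0.
rewrite expRM_natl.
have e_gt0 : 0 < expR (6^-1 : R) := expR_gt0 _.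
have e_le : expR (6^-1 : R) <= 6 / 5.
  have := expR_ge1Dx (- 6^-1 : R); rewrite expRN => h.
  have := ler_wpM2l (ltW e_gt0) h; rewrite mulfV ?gt_eqF //; lra.
apply: (le_lt_trans (y := (6 / 5 : R) ^+ 6)).
  by rewrite ler_pXn2r // ?nnegrE; lra.
rewrite !exprS expr0; lra.
Qed.

(* The abscissa where the tangents to expR at 0 and at w meet. *)
Definition tangent_crossing w := w * expR w / (expR w - 1) - 1.

Lemma tangent_crossing_identity w : 0 < w ->
  expR w + expR w * (tangent_crossing w - w) = 1 + tangent_crossing w.
Proof.
move=> w_gt0; have ew_gt1 : 1 < expR w by rewrite expR_gt1.
rewrite /tangent_crossing; field; lra.
Qed.

Lemma tangent_crossing_ge0 w : 0 < w -> 0 <= tangent_crossing w.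
Proof.
move=> w_gt0; have ew_gt1 : 1 < expR w by rewrite expR_gt1.
have := tangent_crossing_identity w_gt0.
have := expR_tangent_le w 0.
rewrite expR0; nra.
Qed.

Lemma tangent_crossing_le w : 0 < w -> tangent_crossing w <= w.
Proof.
move=> w_gt0; have ew_gt1 : 1 < expR w by rewrite expR_gt1.
have := tangent_crossing_identity w_gt0.
have := expR_ge1Dx w.
nra.
Qed.

Lemma Aw_crossing w : Aw w = expR (tangent_crossing w) - (1 + tangent_crossing w).
Proof. by rewrite /Aw /tangent_crossing; ring. Qed.

Lemma Aw_ge0 w : 0 <= Aw w.
Proof. by rewrite Aw_crossing subr_ge0 expR_ge1Dx. Qed.

Lemma Aw_lt1 w : 0 < w -> w < 1 -> Aw w < 1.
Proof.
move=> w_gt0 w_lt1; rewrite Aw_crossing.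
have t_ge0 := tangent_crossing_ge0 w_gt0; have t_le := tangent_crossing_le w_gt0.
set t := tangent_crossing w in t_ge0 t_le *.
have e_split : expR 1 = expR t * expR (1 - t) by rewrite -expRD; congr expR; ring.
have et_lt : expR t * (2 - t) < 3.
  apply: le_lt_trans expR1_lt3; rewrite e_split ler_wpM2l ?expR_ge0 //.
  by have := expR_ge1Dx (1 - t); lra.
have t_lt1 : t < 1 by lra.
have two_sub_gt0 : 0 < 2 - t by lra.
rewrite ltrBlDr -(ltr_pM2r two_sub_gt0); nra.
Qed.

(* The gap to the nearer tangent is largest at the crossing point, where it is Aw w. *)
Lemma expR_sub_Aw_le_tangents w t : 0 < w -> 0 <= t <= w ->
  expR t - Aw w <= Num.max (1 + t) (expR w + expR w * (t - w)).
Proof.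
move=> w_gt0 /andP[t_ge0 t_le].
have t0_ge0 := tangent_crossing_ge0 w_gt0.
have cross := tangent_crossing_identity w_gt0.
have tangent_t := expR_tangent_le t (tangent_crossing w).
have et_ge1 : 1 <= expR t by have := expR_ge1Dx t; lra.
have et_le : expR t <= expR w by rewrite ler_expR.
rewrite Aw_crossing; set t0 := tangent_crossing w in t0_ge0 cross tangent_t *.
case: (leP t t0) => [t_le_t0 | t0_lt_t]; rewrite le_max.
- by apply/orP; left; nra.
- by apply/orP; right; nra.
Qed.

End ExpTangents.

Section TangentApproximation.
Variables (R : realType) (n : nat) (w : R).
Implicit Types q : R.

Lemma gtan_le_expR q : gtan n w q <= expR q.
Proof. by apply: bigmax_le => [|i _]; apply: expR_tangent_le. Qed.

Lemma gtan_ge_tangent q (i : 'I_n.+1) :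
  expR (i%:R * w) + expR (i%:R * w) * (q - i%:R * w) <= gtan n w q.
Proof. exact: le_bigmax. Qed.

Lemma gtan_ge1 q : 0 <= q -> 1 <= gtan n w q.
Proof.
move=> q_ge0; apply: le_trans (gtan_ge_tangent q ord0).
by rewrite /= mul0r expR0 subr0 mul1r lerDl.
Qed.

Lemma gtan_grid m : (m <= n)%N -> gtan n w (m%:R * w) = expR (m%:R * w).
Proof.
move=> m_le; apply/le_anti; rewrite gtan_le_expR /=.
have := gtan_ge_tangent (m%:R * w) (Ordinal (m_le : (m < n.+1)%N)).
by rewrite /= subrr mulr0 addr0.
Qed.

Lemma grid_cell q : 0 < w -> 0 <= q -> q < n%:R * w ->
  exists2 i : nat, (i < n)%N & i%:R * w <= q < i.+1%:R * w.
Proof.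
move=> w_gt0 q_ge0; elim: n => [|m IHm]; first by rewrite mul0r; lra.
case: (ltP q (m%:R * w)) => [/IHm [i i_lt q_in] _ | q_ge q_lt].
  by exists i => //; apply: ltnW.
by exists m => //; apply/andP.
Qed.

Lemma expR_Aw_le_gtan q : 0 < w -> 0 <= q -> q < n%:R * w ->
  (1 - Aw w) * expR q <= gtan n w q.
Proof.
move=> w_gt0 q_ge0 /(grid_cell w_gt0 q_ge0) [i i_lt /andP[b_le q_lt]].
set b := i%:R * w in b_le q_lt *.
have t_in : 0 <= q - b <= w.
  by apply/andP; split; move: q_lt; rewrite -natr1 mulrDl mul1r -/b; lra.
have expR_q : expR q = expR b * expR (q - b) by rewrite -expRD; congr expR; ring.
have tangent_b := gtan_ge_tangent q (Ordinal (ltnW i_lt : (i < n.+1)%N)).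
have tangent_bw := gtan_ge_tangent q (Ordinal (i_lt : (i.+1 < n.+1)%N)).
rewrite /= -/b in tangent_b; rewrite /= -natr1 mulrDl mul1r -/b expRD in tangent_bw.
have gap := ler_wpM2l (expR_ge0 b) (expR_sub_Aw_le_tangents w_gt0 t_in).
have eb_le : expR b * Aw w <= expR q * Aw w by rewrite ler_wpM2r ?Aw_ge0 ?ler_expR.
have max_le : expR b * Num.max (1 + (q - b)) (expR w + expR w * (q - b - w))
    <= gtan n w q.
  rewrite maxr_pMr ?expR_ge0 // ge_max; apply/andP; split.
  - by apply: le_trans tangent_b; rewrite mulrDr mulr1.
  - by apply: le_trans tangent_bw; lra.
apply: le_trans max_le; apply: le_trans gap.
by rewrite mulrBr -expR_q; lra.
Qed.
End TangentApproximation.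

Section PenaltyGap.
Variable R : realType.

Lemma expR_gap_le (a b : R) : 0 <= a -> a <= b ->
  expR a * (expR b - expR a + 1) <= expR b * expR (b * (1 - expR (- a))).
Proof.
(* With z = (e^a - 1) e^{-b}: e^b - e^a + 1 = e^b (1 - z) <= e^{b - z}, and
   a - z <= b (1 - e^{-a}) because e^{a - b} + b >= 1 + a. *)
move=> a_ge0 a_le_b.
have ea_inv : expR (- a) * expR a = 1 by rewrite -expRD addNr expR0.
have eab : expR b * expR (a - b) = expR a by rewrite -expRD; congr expR; ring.
have ena_le1 : expR (- a) <= 1 by rewrite -expR0 ler_expR; lra.
set z := (1 - expR (- a)) * expR (a - b).
have M_le : expR b - expR a + 1 <= expR b * expR (- z).
  have -> : expR b - expR a + 1 = expR b * (1 - z).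
    transitivity (expR b - expR b * expR (a - b) + expR (- a) * (expR b * expR (a - b))).
      by rewrite eab ea_inv.
    by rewrite /z; ring.
  by rewrite ler_wpM2l ?expR_ge0 //; have := expR_ge1Dx (- z); lra.
have exponent_le : a - z <= b * (1 - expR (- a)).
  have : (1 - expR (- a)) * (1 + (a - b)) <= z by rewrite ler_wpM2l ?expR_ge1Dx //; lra.
  have : expR (- a) * (1 + a) <= 1.
    by rewrite -[X in _ <= X]ea_inv ler_wpM2l ?expR_ge0 ?expR_ge1Dx.
  nra.
apply: le_trans (_ : expR a * (expR b * expR (- z)) <= _).
  by rewrite ler_wpM2l ?expR_ge0.
rewrite mulrCA -[expR a * _]expRD ler_wpM2l ?expR_ge0 // ler_expR; lra.
Qed.

Lemma linearized_score_ge (A B K g a b : R) :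
  0 < B -> B <= K -> K + B * (expR a - 1) <= B * expR b -> 0 <= a ->
  1 <= g -> (1 - A) * expR a <= g -> 0 <= A -> A <= 1 ->
  (1 - A) * expR a * expR (- (b * (1 - expR (- a)))) * K <= K + B * (g - 1).
Proof.
move=> B_gt0 B_le_K opt a_ge0 g_ge1 g_ge A_ge0 A_le1.
have ea_le_eb : expR a <= expR b.
  by rewrite -(ler_pM2l B_gt0); have := expR_ge1Dx a; nra.
have a_le_b : a <= b by rewrite -ler_expR.
set M := expR b - expR a + 1.
have M_gt0 : 0 < M by rewrite /M; lra.
have K_gt0 : 0 < K by lra.
set c := b * (1 - expR (- a)).
have K_le : (1 - A) * expR b * K <= (K + B * (g - 1)) * M.
  have : (g - 1) * K <= (g - 1) * (B * M) by rewrite ler_wpM2l /M; lra.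
  have : (1 - A) * expR b * K <= (M + g - 1) * K.
    apply: ler_wpM2r; first lra.
    have : A * expR a <= A * expR b by rewrite ler_wpM2l.
    rewrite /M; lra.
  nra.
have gap_le : expR a * M * expR (- c) <= expR b.
  rewrite -[X in _ <= X]mulr1 -(expR0 R) -(addrN c) expRD mulrA ler_wpM2r ?expR_ge0 //.
  exact: expR_gap_le.
rewrite -(ler_pM2r M_gt0); apply: le_trans K_le.
have -> : (1 - A) * expR a * expR (- c) * K * M = (1 - A) * K * (expR a * M * expR (- c)).
  by ring.
rewrite [X in _ <= X]mulrAC ler_wpM2l // mulr_ge0 //; lra.
Qed.

Lemma penalty_gap_bounds (kappa T B K g A ss sa : R) :
  kappa < 0 -> 0 < T -> 0 < B -> B <= K -> 0 <= ss ->
  K + B * (expR (- kappa * ss) - 1) <= B * expR (- kappa * sa) ->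
  1 <= g -> g <= expR (- kappa * ss) -> (1 - A) * expR (- kappa * ss) <= g ->
  0 <= A -> A < 1 ->
  let sdd := - kappa^-1 * ln (T^-1 * (K + B * (g - 1))) - - kappa^-1 * ln (T^-1 * K) in
  0 <= ss - sdd /\ ss - sdd <= sa * (1 - expR (kappa * ss)) + kappa^-1 * ln (1 - A).
Proof.
move=> kappa_lt0 T_gt0 B_gt0 B_le_K ss_ge0 opt g_ge1 g_le g_ge A_ge0 A_lt1 sdd.
have K_gt0 : 0 < K by lra.
have X_gt0 : 0 < K + B * (g - 1) by nra.
have lam_gt0 : 0 < - kappa^-1 by rewrite oppr_gt0 invr_lt0.
set a := - kappa * ss in opt g_le g_ge.
set L := ln ((K + B * (g - 1)) / K).
have sdd_eq : sdd = - kappa^-1 * L.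
  have : T^-1 * (K + B * (g - 1)) = T^-1 * K * ((K + B * (g - 1)) / K).
    by field; rewrite !lt0r_neq0.
  rewrite /sdd /L => ->.
  by rewrite [ln (T^-1 * K * _)]lnM ?posrE ?mulr_gt0 ?divr_gt0 ?invr_gt0 //; ring.
have ss_eq : ss = - kappa^-1 * a by rewrite /a mulrA mulrNN mulVf ?lt_eqF // mul1r.
have L_le_a : L <= a.
  rewrite /L -[X in _ <= X]expRK ler_ln ?posrE ?divr_gt0 ?expR_gt0 //.
  rewrite ler_pdivrMr //; nra.
have a_ge0 : 0 <= a by rewrite /a mulr_ge0 // oppr_ge0 ltW.
set b := - kappa * sa in opt.
set c := b * (1 - expR (- a)).
have L_ge : ln (1 - A) + a - c <= L.
  have := linearized_score_ge B_gt0 B_le_K opt a_ge0 g_ge1 g_ge A_ge0 (ltW A_lt1).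
  have -> : ln (1 - A) + a - c = ln ((1 - A) * expR a * expR (- c)).
    by rewrite !lnM ?posrE ?mulr_gt0 ?expR_gt0 ?subr_gt0 // !expRK.
  rewrite /L ler_ln ?posrE ?mulr_gt0 ?invr_gt0 ?expR_gt0 ?subr_gt0 //.
  by rewrite ler_pdivlMr.
have sa_eq : sa = - kappa^-1 * b by rewrite /b mulrA mulrNN mulVf ?lt_eqF // mul1r.
have -> : expR (kappa * ss) = expR (- a) by rewrite /a mulNr opprK.
have -> : kappa^-1 = - (- kappa^-1) by rewrite opprK.
rewrite sdd_eq ss_eq sa_eq -mulrBr; split; first by apply: mulr_ge0; lra.
have -> : - kappa^-1 * b * (1 - expR (- a)) + - - kappa^-1 * ln (1 - A)
    = - kappa^-1 * (c - ln (1 - A)) by rewrite /c; ring.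
by rewrite ler_wpM2l; lra.
Qed.
End PenaltyGap.

Section Model.
Variables (R : realType) (Rr Ss : finType).
Implicit Types (p : Rr -> R) (d : Rr -> Ss -> R) (c x : Ss -> R) (y : Rr -> Ss -> R).

Lemma totT_gt0 p : (0 < #|Rr|)%N -> (forall r, 0 < p r) -> 0 < totT p.
Proof.
move=> /card_gt0P[r0 _] p_gt0; rewrite /totT (bigD1 r0) //=.
by rewrite ltr_pwDl ?sumr_ge0 // => r _; apply: ltW.
Qed.

Lemma totT_le_Kbar k p d kappa x y : (forall r, 0 <= p r) ->
  (forall r s, 0 <= d r s) -> kappa < 0 -> feasible k x y -> totT p <= Kbar p d kappa y.
Proof.
move=> p_ge0 d_ge0 kappa_lt0 [_ y_bin _ _ y_row]; rewrite /totT /Kbar; apply: ler_sum => r _.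
rewrite -[X in X <= _]mulr1 -(y_row r) mulr_sumr; apply: ler_sum => s _.
rewrite -[X in X <= _]mulr1; apply: ler_wpM2l.
  by rewrite mulr_ge0 //; case: (y_bin r s) => ->; lra.
by rewrite -expR0 ler_expR; have := d_ge0 r s; nra.
Qed.

Lemma totT_expR_KP p d kappa y : kappa != 0 -> 0 < totT p -> 0 < Kbar p d kappa y ->
  totT p * expR (- kappa * KP p d kappa y) = Kbar p d kappa y.
Proof.
move=> kappa_neq0 T_gt0 K_gt0.
rewrite /KP mulrA mulrNN mulfV // mul1r lnK ?posrE ?mulr_gt0 ?invr_gt0 //.
by rewrite mulrA mulfV ?mul1r // lt0r_neq0.
Qed.

Lemma sigma_ge0 (U : {set Ss}) c x : (forall s, s \in U -> 0 <= c s) ->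
  (forall s, binary (x s)) -> 0 <= sigma U c x.
Proof.
move=> c_ge0 x_bin; apply: sumr_ge0 => s sU.
by rewrite mulr_ge0 ?c_ge0 //; case: (x_bin s) => ->; lra.
Qed.

Lemma sigma_const (U : {set Ss}) c x (c0 : R) : (forall s, s \in U -> c s = c0) ->
  (forall s, binary (x s)) -> exists m : nat, sigma U c x = c0 * m%:R.
Proof.
move=> c_const x_bin; exists (\sum_(s in U) (x s == 1%R :> R))%N.
rewrite /sigma natr_sum mulr_sumr; apply: eq_bigr => s sU.
by rewrite c_const //; case: (x_bin s) => ->; rewrite ?eqxx // eq_sym oner_eq0.
Qed.

Lemma KPLp_optimum_le k (U : {set Ss}) c p d kappa Khat xs ys vs qs xa ya :
  (forall r, 0 <= p r) -> KPLp_feasible k U c kappa xs ys vs qs ->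
  (forall x y v q, KPLp_feasible k U c kappa x y v q ->
     KPLp_obj p d kappa Khat ys vs <= KPLp_obj p d kappa Khat y v) ->
  feasible k xa ya ->
  Kbar p d kappa ys + totT p * expR (- kappa * Khat) * (expR qs - 1)
    <= KPLp_obj p d kappa Khat ya (expR (- kappa * sigma U c xa)).
Proof.
move=> p_ge0 [_ vs_ge _] opt feas_a.
apply: le_trans (opt _ _ _ _ (And3 feas_a (lexx _) erefl)).
by rewrite lerD2l ler_wpM2l ?lerD2r ?mulr_ge0 ?expR_ge0 ?sumr_ge0.
Qed.
End Model.

Theorem corollary3 (R : realType) (Rr Ss : finType)
  (HRne : (0 < #|Rr|)%N) (HSne : (0 < #|Ss|)%N)
  (k : nat) (Hk : (0 < k)%N)
  (p : Rr -> R) (Hp : forall r, 0 < p r)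
  (d : Rr -> Ss -> R) (Hd : forall r s, 0 <= d r s)
  (kappa : R) (Hkappa : kappa < 0)
  (U : {set Ss}) (c : Ss -> R) (Hc : forall s, s \in U -> 0 <= c s)
  (sigma_max : R)
  (Hsmax1 : exists (x : Ss -> R) (y : Rr -> Ss -> R), feasible k x y /\ sigma U c x = sigma_max)
  (Hsmax2 : forall (x : Ss -> R) (y : Rr -> Ss -> R), feasible k x y -> sigma U c x <= sigma_max)
  (xall : Ss -> R) (yall : Rr -> Ss -> R)
  (Hall1 : feasible k xall yall)
  (Hall2 : forall (x : Ss -> R) (y : Rr -> Ss -> R), feasible k x y -> Kbar p d kappa yall <= Kbar p d kappa y)
  (xs : Ss -> R) (ys : Rr -> Ss -> R) (vs qs : R)
  (Hs1 : KPLp_feasible k U c kappa xs ys vs qs)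
  (Hs2 : forall (x : Ss -> R) (y : Rr -> Ss -> R) (v q : R), KPLp_feasible k U c kappa x y v q ->
     KPLp_obj p d kappa (KP p d kappa yall) ys vs
       <= KPLp_obj p d kappa (KP p d kappa yall) y v)
  (w : R) (Hw0 : 0 < w) (Hw1 : w < 1)
  (n : nat) (Hn : n%:R * w > - kappa * sigma_max) :
  let T := totT p in
  let Kall := KP p d kappa yall in
  let sigma_all := sigma U c xall in
  let Khat := Kall in
  let sigma_s := sigma U c xs in
  let Ks := KP p d kappa ys in
  let sigma_dd :=
    - kappa^-1 * ln (T^-1 * (Kbar p d kappa ys
        + T * expR (- kappa * Khat) * (gtan n w qs - 1))) - Ks in
  (0 <= sigma_s - sigma_dd /\
   sigma_s - sigma_dd <= sigma_all * (1 - expR (kappa * sigma_s))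
                         + kappa^-1 * ln (1 - Aw w)) /\
  (forall c0 : R, (forall s, s \in U -> c s = c0) -> w = - kappa * c0 ->
    0 <= sigma_s - sigma_dd /\
    sigma_s - sigma_dd <= sigma_all * (1 - expR (kappa * sigma_s))).
Proof.
move=> T Kall sigma_all Khat sigma_s Ks sigma_dd.
have p_ge0 r : 0 <= p r := ltW (Hp r).
have [feas_s _ Hqs] := Hs1; have [xs_bin _ _ _ _] := feas_s; subst qs.
have T_gt0 : 0 < T := totT_gt0 HRne Hp.
have T_le_B : T <= Kbar p d kappa yall := totT_le_Kbar p_ge0 Hd Hkappa Hall1.
have B_gt0 := lt_le_trans T_gt0 T_le_B.
have TB : T * expR (- kappa * Khat) = Kbar p d kappa yall :=
  totT_expR_KP (ltr0_neq0 Hkappa) T_gt0 B_gt0.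
have opt : Kbar p d kappa ys + Kbar p d kappa yall * (expR (- kappa * sigma_s) - 1)
    <= Kbar p d kappa yall * expR (- kappa * sigma_all).
  by have := KPLp_optimum_le p_ge0 Hs1 Hs2 Hall1; rewrite /KPLp_obj TB; lra.
have qs_ge0 : 0 <= - kappa * sigma_s by rewrite mulr_ge0 ?sigma_ge0 // oppr_ge0 ltW.
have qs_lt : - kappa * sigma_s < n%:R * w.
  by apply: le_lt_trans Hn; rewrite ler_wpM2l ?(Hsmax2 _ _ feas_s) // oppr_ge0 ltW.
have gap_bounds A := penalty_gap_bounds (A := A) Hkappa T_gt0 B_gt0 (Hall2 _ _ feas_s)
  (sigma_ge0 Hc xs_bin) opt (gtan_ge1 n w qs_ge0) (gtan_le_expR _ _ _).
rewrite /sigma_dd /Ks /Khat TB /KP; split.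
  exact: gap_bounds (expR_Aw_le_gtan Hw0 qs_ge0 qs_lt) (Aw_ge0 w) (Aw_lt1 Hw0 Hw1).
move=> c0 c_const w_eq; have [m sigma_m] := sigma_const c_const xs_bin.
have qs_grid : - kappa * sigma_s = m%:R * w by rewrite /sigma_s sigma_m w_eq; ring.
have m_lt : (m < n)%N by rewrite -(ltr_nat R) -(ltr_pM2r Hw0) -qs_grid.
have := gap_bounds 0; rewrite subr0 mul1r ln1 mulr0 addr0; apply=> //.
by rewrite qs_grid gtan_grid // ltnW.
Qed.
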